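(* Let $A,B,C\in\mathrm{Sym}(\mathbb C^{2d})$. If $A\#B$, $B\#C$, $(A\#B)\#C$ and $A\#(B\#C)$ are all well defined, then $(A\#B)\#C=A\#(B\#C)$. Moreover, for all $A,B\in\mathrm{Sym}(\mathbb C^{2d})$ (whenever the products are well defined): $A\#0=0\#A=A$, $A\#(-A)=0$, $\overline{A\#B}=\bar B\#\bar A$, and $(-A)\#(-B)=-(B\#A)$.
   Context: Let $d\ge 1$, let $\mathbb 1$ denote an identity matrix, and let $\theta=\begin{bmatrix}0&-i\mathbb 1_d\\ i\mathbb 1_d&0\end{bmatrix}$ ($2d\times 2d$). $\mathrm{Sym}(\mathbb C^{n})$ denotes the set of complex symmetric $n\times n$ matrices; $\bar A$ is the entrywise complex conjugate. For $A,B\in\mathrm{Sym}(\mathbb C^{2d})$ such that $M=\begin{bmatrix}\theta A\theta&-\theta\\ \theta&\theta B\theta\end{bmatrix}$ is invertible, one defines $A\#B:=J^TM^{-1}J\in\mathrm{Sym}(\mathbb C^{2d})$, where $J=\begin{bmatrix}-\mathbb 1_{2d}\\ \mathbb 1_{2d}\end{bmatrix}$; $A\#B$ is called well defined when $M$ is invertible. *)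

(* Complex numbers: an arbitrary numClosedFieldType C
   (e.g. algC), with imaginary unit 'i and complex conjugation Num.conj. *)
From HB Require Import structures.
From mathcomp Require Import all_boot all_order all_algebra.
Set Implicit Arguments. Unset Strict Implicit. Unset Printing Implicit Defensive.
Import Order.TTheory GRing.Theory Num.Theory.
Local Open Scope ring_scope.

Section Sharp.
Variable C : numClosedFieldType.
Variable d : nat.

Definition symmx (A : 'M[C]_(d + d)) : bool := A^T == A.

Definition theta : 'M[C]_(d + d) :=
  block_mx 0 (- ('i%:M)) ('i%:M) 0.

Definition sharpM (A B : 'M[C]_(d + d)) : 'M[C]_((d + d) + (d + d)) :=
  block_mx (theta *m A *m theta) (- theta) theta (theta *m B *m theta).

Definition sharpJ : 'M[C]_((d + d) + (d + d), d + d) :=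
  col_mx (- 1%:M) 1%:M.

Definition sharp_wd (A B : 'M[C]_(d + d)) : bool := sharpM A B \in unitmx.

Definition sharp (A B : 'M[C]_(d + d)) : 'M[C]_(d + d) :=
  sharpJ^T *m invmx (sharpM A B) *m sharpJ.

Definition entconjmx (A : 'M[C]_(d + d)) : 'M[C]_(d + d) := map_mx Num.conj A.

End Sharp.

Arguments symmx {C d} A.
Arguments theta {C d}.
Arguments sharpM {C d} A B.
Arguments sharpJ {C d}.
Arguments sharp_wd {C d} A B.
Arguments sharp {C d} A B.
Arguments entconjmx {C d} A.

From HB Require Import structures.
From mathcomp Require Import all_boot all_order all_algebra ring.
Import Order.TTheory GRing.Theory Num.Theory.
Local Open Scope ring_scope.
Set Implicit Arguments. Unset Strict Implicit.

(* Since theta^2 = 1, [M *m col_mx x y = J *m theta *m z] unfolds to the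
   linear system [A theta x - y = - z], [x + B theta y = z], and then
   [(A # B) theta z = J^T col_mx x y = y - x].  So [A # B] is determined by the
   solutions of these systems, and every identity follows by exhibiting a
   solution of one system built from solutions of others; for associativity
   one solves the systems for [A # (B # D)] and [B # D] and recombines them
   into solutions of the systems for [A # B] and [(A # B) # D]. *)

(* [theta] is abstracted first, as [mxE] would otherwise expand its block form. *)
Ltac mx_linear :=
  rewrite ?(mulmxDr, mulmxN, mulNmx);
  try match goal with |- context [@theta ?C ?d] => move: (@theta C d) => t end;
  apply/matrixP => i j; rewrite !mxE; ring.

(* [lin_comb e] reduces [L = R] to [e = 0], after checking that [L - R = e]
   holds as a formal additive identity. *)
Tactic Notation "lin_comb" constr(e) :=
  apply/subr0_eq; transitivity e; first mx_linear.

Section Sharp.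
Variables (C : numClosedFieldType) (d : nat).
Implicit Types A B D X x y z : 'M[C]_(d + d).

Lemma theta_sqr : theta *m theta = 1%:M :> 'M[C]_(d + d).
Proof.
rewrite /theta mulmx_block !mulmx0 !mul0mx !addr0 !add0r mulNmx mulmxN.
by rewrite -!scalar_mxM -expr2 sqrCi -(raddfN (@scalar_mx _ _)) opprK
  -scalar_mx_block.
Qed.

Lemma map_conj_theta : map_mx Num.conj theta = - theta :> 'M[C]_(d + d).
Proof.
rewrite /theta map_block_mx !map_mx0 map_mxN !map_scalar_mx /= conjCi.
by rewrite opp_block_mx !oppr0 !(raddfN (@scalar_mx _ _)) opprK.
Qed.

Definition sharp_sys A B z x y :=
  A *m (theta *m x) - y = - z /\ x + B *m (theta *m y) = z.

Lemma sharp_sysE A B z x y :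
  sharp_sys A B z x y <->
  sharpM A B *m col_mx x y = col_mx (- (theta *m z)) (theta *m z).
Proof.
have theta_inj X Y : theta *m X = theta *m Y -> X = Y.
  by move=> eqXY; rewrite -[X]mul1mx -[Y]mul1mx -theta_sqr -!mulmxA eqXY.
rewrite /sharpM mul_block_col -mulmxN.
rewrite (_ : _ + _ *m y = theta *m (A *m (theta *m x) - y)); last first.
  by rewrite mulmxBr mulNmx !mulmxA.
rewrite (_ : theta *m x + _ = theta *m (x + B *m (theta *m y))); last first.
  by rewrite mulmxDr !mulmxA.
split; first by case=> -> ->.
by case/eq_col_mx => /theta_inj eq1 /theta_inj eq2.
Qed.

Lemma sharp_sys_exists A B z :
  sharp_wd A B -> exists x y, sharp_sys A B z x y.
Proof.
move=> wd; pose X := invmx (sharpM A B) *m col_mx (- (theta *m z)) (theta *m z).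
by exists (usubmx X), (dsubmx X); apply/sharp_sysE; rewrite vsubmxK mulKVmx.
Qed.

Lemma sharp_sys_uniq A B z x y x' y' :
  sharp_wd A B -> sharp_sys A B z x y -> sharp_sys A B z x' y' ->
  x = x' /\ y = y'.
Proof.
move=> wd /sharp_sysE sol /sharp_sysE sol'.
by apply/eq_col_mx/(can_inj (mulKmx wd)); rewrite sol sol'.
Qed.

Lemma sharp_mul_theta A B z x y :
  sharp_wd A B -> sharp_sys A B z x y -> sharp A B *m (theta *m z) = y - x.
Proof.
move=> wd /sharp_sysE sol.
have Jz : sharpJ *m (theta *m z) = col_mx (- (theta *m z)) (theta *m z).
  by rewrite /sharpJ mul_col_mx mulNmx !mul1mx.
rewrite -Jz in sol.
rewrite /sharp -!mulmxA -sol mulKmx // /sharpJ tr_col_mx.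
by rewrite mul_row_col raddfN /= trmx1 mulNmx !mul1mx addrC.
Qed.

Lemma sharp_sys_theta A B x y :
  sharp_wd A B -> sharp_sys A B theta x y -> sharp A B = y - x.
Proof. by move=> wd /(sharp_mul_theta wd); rewrite theta_sqr mulmx1. Qed.

Lemma sharpA A B D :
  sharp_wd A B -> sharp_wd B D ->
  sharp_wd (sharp A B) D -> sharp_wd A (sharp B D) ->
  sharp (sharp A B) D = sharp A (sharp B D).
Proof.
move=> wdAB wdBD wdL wdR.
have [a [e [eq1 eq2]]] := sharp_sys_exists theta wdR.
have [b [c [eq3 eq4]]] := sharp_sys_exists e wdBD.
rewrite (sharp_sys_theta wdR (conj eq1 eq2)).
rewrite (sharp_mul_theta wdBD (conj eq3 eq4)) in eq2.
have solAB : sharp_sys A B (a + B *m (theta *m b)) a b.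
  split=> //; lin_comb ((A *m (theta *m a) - e - - theta)
                        + (B *m (theta *m b) - c - - e) + (a + (c - b) - theta)).
  by rewrite eq1 eq2 eq3 !subrr !addr0.
have solL : sharp_sys (sharp A B) D theta (a + B *m (theta *m b)) c.
  rewrite /sharp_sys (sharp_mul_theta wdAB solAB); split.
    by lin_comb (- (a + (c - b) - theta)); rewrite eq2 subrr oppr0.
  lin_comb ((a + (c - b) - theta) + (B *m (theta *m b) - c - - e)
            + (b + D *m (theta *m c) - e)).
  by rewrite eq2 eq3 eq4 !subrr !addr0.
rewrite (sharp_sys_theta wdL solL).
by lin_comb (- (B *m (theta *m b) - c - - e)); rewrite eq3 subrr oppr0.
Qed.

Lemma sharpx0 A : sharp_wd A 0 -> sharp A 0 = A.
Proof.
move=> wd; have sol : sharp_sys A 0 theta theta (A + theta).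
  by split; rewrite ?mul0mx ?addr0 // theta_sqr mulmx1; mx_linear.
by rewrite (sharp_sys_theta wd sol) addrK.
Qed.

Lemma sharp0x A : sharp_wd 0 A -> sharp 0 A = A.
Proof.
move=> wd; have sol : sharp_sys 0 A theta (theta - A) theta.
  by split; rewrite ?mul0mx ?add0r // theta_sqr mulmx1; mx_linear.
by rewrite (sharp_sys_theta wd sol) opprB addrC subrK.
Qed.

Lemma sharpxN A : sharp_wd A (- A) -> sharp A (- A) = 0.
Proof.
move=> wd; have [x [y [eq1 eq2]]] := sharp_sys_exists theta wd.
have sol' : sharp_sys A (- A) theta y x.
  split; first by lin_comb (- (x + - A *m (theta *m y) - theta));
    rewrite eq2 subrr oppr0.
  by lin_comb (- (A *m (theta *m x) - y - - theta)); rewrite eq1 subrr oppr0.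
have [eq_xy _] := sharp_sys_uniq wd (conj eq1 eq2) sol'.
by rewrite (sharp_sys_theta wd sol') eq_xy subrr.
Qed.

Lemma sharpNN A B : sharp_wd (- A) (- B) -> sharp_wd B A ->
  sharp (- A) (- B) = - sharp B A.
Proof.
move=> wd wd'; have [x [y [eq1 eq2]]] := sharp_sys_exists theta wd.
have sol' : sharp_sys B A theta y x.
  split; first by lin_comb (- (x + - B *m (theta *m y) - theta));
    rewrite eq2 subrr oppr0.
  by lin_comb (- (- A *m (theta *m x) - y - - theta)); rewrite eq1 subrr oppr0.
by rewrite (sharp_sys_theta wd (conj eq1 eq2)) (sharp_sys_theta wd' sol') opprB.
Qed.

Lemma entconjmx_sharp A B :
  sharp_wd A B -> sharp_wd (entconjmx B) (entconjmx A) ->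
  entconjmx (sharp A B) = sharp (entconjmx B) (entconjmx A).
Proof.
move=> wd wd'; have [x [y [eq1 eq2]]] := sharp_sys_exists theta wd.
rewrite (sharp_sys_theta wd (conj eq1 eq2)).
move: eq1 eq2 => /(congr1 entconjmx) eq1 /(congr1 entconjmx) eq2.
rewrite /entconjmx !(map_mxM, map_mxD, map_mxN) map_conj_theta in wd' eq1 eq2 *.
set x' := map_mx _ x in eq1 eq2 *; set y' := map_mx _ y in eq1 eq2 *.
set A' := map_mx _ A in eq1 wd' *; set B' := map_mx _ B in eq2 wd' *.
clearbody x' y' A' B'.
have sol' : sharp_sys B' A' theta (- y') (- x').
  split; first by lin_comb (x' + B' *m (- theta *m y') - - theta);
    rewrite eq2 subrr.
  by lin_comb (A' *m (- theta *m x') - y' - - - theta); rewrite eq1 subrr.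
by rewrite (sharp_sys_theta wd' sol') opprK addrC.
Qed.

End Sharp.

Theorem mainTheorem2 (C : numClosedFieldType) (d : nat) (hd : (0 < d)%N) :
  (forall A B D : 'M[C]_(d + d),
     symmx A -> symmx B -> symmx D ->
     sharp_wd A B -> sharp_wd B D ->
     sharp_wd (sharp A B) D -> sharp_wd A (sharp B D) ->
     sharp (sharp A B) D = sharp A (sharp B D)) /\
  (forall A B : 'M[C]_(d + d), symmx A -> symmx B ->
     (sharp_wd A 0 -> sharp A 0 = A) /\
     (sharp_wd 0 A -> sharp 0 A = A) /\
     (sharp_wd A (- A) -> sharp A (- A) = 0) /\
     (sharp_wd A B -> sharp_wd (entconjmx B) (entconjmx A) ->
        entconjmx (sharp A B) = sharp (entconjmx B) (entconjmx A)) /\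
     (sharp_wd (- A) (- B) -> sharp_wd B A ->
        sharp (- A) (- B) = - sharp B A)).
Proof.
split=> [A B D _ _ _|A B _ _]; first exact: sharpA.
split; first exact: sharpx0.
split; first exact: sharp0x.
split; first exact: sharpxN.
split; [exact: entconjmx_sharp | exact: sharpNN].
Qed.
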